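(* Let $n\ge 4$. Consider the two-graph Moran process on $n$ vertices in which the resident graph $G_R$ is the undirected star $K_{1,n-1}$ and the mutant graph $G_M$ is the clique $K_n$. If $r>\big((n-4)!\big)^{-1/(n-2)}$, then the fixation probability satisfies $$f_{G_R,G_M}(r)\ \ge\ \frac{1-\frac1n}{1+\frac{1}{r(n-2)}+\frac{1}{r^2(n-3)}}\ >\ 1-\frac1n-\frac{1}{r(n-2)}-\frac{1}{r^2(n-3)}.$$
   Context: Two-graph Moran process: vertex set $V=\{1,\dots,n\}$; resident graph $G_R=(V,E_R)$ and mutant graph $G_M=(V,E_M)$, strongly connected, with row-stochastic weight matrices $W_R=[w^R_{ij}]$, $W_M=[w^M_{ij}]$ ($w^R_{ij}>0$ iff $(i,j)\in E_R$, similarly for $M$). The state is the mutant set $S$; residents have fitness $1$, mutants fitness $r>0$. Each step a vertex $i$ is chosen with probability proportional to fitness; if $i$ is a mutant, it picks $j$ with probability $w^M_{ij}$ and $j$ becomes a mutant; if a resident, it picks $j$ with probability $w^R_{ij}$ and $j$ becomes a resident. Absorption at $S=\emptyset$ or $S=V$ (fixation). The fixation probability $f_{G_R,G_M}(r)$ is the probability of fixation when starting with one mutant at a uniformly random vertex. Undirected graphs are unweighted: $w_{ij}=1/\deg(i)$ for each neighbour $j$ of $i$ (edges in both directions). Thus for the clique $K_n$, $w_{ij}=1/(n-1)$ for all $j\ne i$. *)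

From HB Require Import structures.
From mathcomp Require Import all_boot all_order all_algebra.
From mathcomp Require Import all_classical all_reals all_analysis.
Set Implicit Arguments. Unset Strict Implicit. Unset Printing Implicit Defensive.
Import Order.TTheory GRing.Theory Num.Theory numFieldNormedType.Exports.
Local Open Scope ring_scope.

Section Moran.
Variables (R : realType) (n : nat).

Definition weights := 'I_n -> 'I_n -> R.

Definition total_fitness (r : R) (S : {set 'I_n}) : R :=
  r * #|S|%:R + (n - #|S|)%:R.

Definition moran_trans (wR wM : weights) (r : R) (S T : {set 'I_n}) : R :=
  \sum_(i : 'I_n) \sum_(j : 'I_n)
    (if i \in S
     then r / total_fitness r S * wM i j * (T == j |: S)%:R
     else 1 / total_fitness r S * wR i j * (T == S :\ j)%:R).

Fixpoint moran_dist (wR wM : weights) (r : R) (S0 : {set 'I_n}) (t : nat)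
    : {set 'I_n} -> R :=
  match t with
  | 0 => fun T => (T == S0)%:R
  | t'.+1 => fun T =>
      \sum_(U : {set 'I_n}) moran_dist wR wM r S0 t' U * moran_trans wR wM r U T
  end.

(* Probability of fixation (absorption at S = V) from S0: since V is absorbing,
   this is the limit of the probability of being at V after t steps. *)
Definition fixation_from (wR wM : weights) (r : R) (S0 : {set 'I_n}) : R :=
  limn (fun t => moran_dist wR wM r S0 t [set: 'I_n]).

Definition fixation_prob (wR wM : weights) (r : R) : R :=
  n%:R^-1 * \sum_(i : 'I_n) fixation_from wR wM r [set i].

Definition clique_weights : weights :=
  fun i j => if i == j then 0 else (n.-1)%:R^-1.

(* Star K_{1,n-1} (unweighted, undirected) with centre the vertex of index 0:
   the centre has degree n-1, each leaf has degree 1 (adjacent to the centre). *)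
Definition star_weights : weights :=
  fun i j => if i == j then 0
             else if val i == 0%N then (n.-1)%:R^-1
             else if val j == 0%N then 1 else 0.

End Moran.

Arguments clique_weights R n : clear implicits.
Arguments star_weights R n : clear implicits.

From HB Require Import structures.
From mathcomp Require Import all_boot all_order all_algebra.
From mathcomp Require Import all_classical all_reals all_analysis.
From mathcomp Require Import ring lra zify.
Set Implicit Arguments. Unset Strict Implicit. Unset Printing Implicit Defensive.
Import Order.TTheory GRing.Theory Num.Theory numFieldNormedType.Exports.
Local Open Scope ring_scope.

(* Let h be a function on the states of a finite Markov chain with values in
   [0, 1], equal to 1 at an absorbing state v and subharmonic (h <= P h).  Then
   h along the chain is a bounded submartingale, and if h has positive jump
   energy at every state other than v where it does not vanish, h(S0) is at
   most the probability of absorption at v.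

   For star residents and clique mutants take h(V) = 1 and h(S) = g(k) otherwise,
   k the number of mutant leaves, g(k) = (pi_0 + ... + pi_(k-1)) / Z and
   Z = pi_0 + ... + pi_(n-1).  The weights pi make h harmonic while the centre
   is resident; once the centre is mutant, residents can only recapture the
   centre, which does not change k.  A single mutant on a leaf thus fixes with
   probability at least 1/Z, so f >= (1 - 1/n) / Z.  The ratios pi_(k+1)/pi_k
   are nondecreasing, so pi_k <= max(pi_2, pi_(n-1)) for k >= 2, and the bound
   on r gives pi_(n-1) <= pi_2; hence
   Z <= 1 + pi_1 + (n-2) pi_2 = 1 + 1/(r(n-2)) + 1/(r^2(n-3)). *)

Section FiniteMarkovChain.
Variables (R : realType) (T : finType) (P : T -> T -> R).
Hypothesis P_ge0 : forall x y, 0 <= P x y.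
Hypothesis P_sum1 : forall x, \sum_y P x y = 1.
Local Open Scope classical_set_scope.

Fixpoint chain_dist (x0 : T) (t : nat) : T -> R :=
  if t is t'.+1 then fun y => \sum_x chain_dist x0 t' x * P x y
  else fun y => (y == x0)%:R.

Definition next_mean (f : T -> R) (x : T) : R := \sum_y P x y * f y.

Definition expect (x0 : T) (t : nat) (f : T -> R) : R :=
  \sum_x chain_dist x0 t x * f x.

Definition jump_energy (h : T -> R) (x : T) : R :=
  \sum_y P x y * (h y - h x) ^+ 2.

Lemma chain_dist_ge0 x0 t y : 0 <= chain_dist x0 t y.
Proof.
elim: t y => [|t IH] y /=; first by rewrite ler0n.
by apply: sumr_ge0 => x _; apply: mulr_ge0.
Qed.

Lemma expect0 x0 f : expect x0 0 f = f x0.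
Proof.
rewrite /expect (bigD1 x0) //= eqxx mul1r big1 ?addr0 // => x /negbTE ->.
by rewrite mul0r.
Qed.

Lemma expectS x0 t f : expect x0 t.+1 f = expect x0 t (next_mean f).
Proof.
rewrite /expect /next_mean /=.
under eq_bigr => y _ do rewrite mulr_suml.
rewrite exchange_big /=; apply: eq_bigr => x _.
by rewrite mulr_sumr; apply: eq_bigr => y _; rewrite mulrA.
Qed.

Lemma next_mean_cst c x : next_mean (fun=> c) x = c.
Proof. by rewrite /next_mean -mulr_suml P_sum1 mul1r. Qed.

Lemma next_mean_subr f c x : next_mean (fun y => f y - c) x = next_mean f x - c.
Proof.
rewrite /next_mean -[c in RHS](next_mean_cst c x) -sumrB.
by apply: eq_bigr => y _; rewrite mulrBr.
Qed.

Lemma sum_chain_dist x0 t : \sum_y chain_dist x0 t y = 1.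
Proof.
have -> : \sum_y chain_dist x0 t y = expect x0 t (fun=> 1).
  by apply: eq_bigr => y _; rewrite mulr1.
elim: t => [|t IH]; first by rewrite expect0.
by rewrite expectS -[RHS]IH; apply: eq_bigr => x _; rewrite next_mean_cst.
Qed.

Lemma expect_le x0 t f g :
  (forall x, f x <= g x) -> expect x0 t f <= expect x0 t g.
Proof.
by move=> fg; apply: ler_sum => x _; apply: ler_wpM2l; rewrite ?chain_dist_ge0.
Qed.

Lemma expect_cst x0 t c : expect x0 t (fun=> c) = c.
Proof. by rewrite /expect -mulr_suml sum_chain_dist mul1r. Qed.

Lemma expect_subharmonic_nondecreasing x0 f :
  (forall x, f x <= next_mean f x) ->
  {homo expect x0 ^~ f : s t / (s <= t)%N >-> s <= t}.
Proof.
by move=> fsub; apply/nondecreasing_seqP => t; rewrite expectS expect_le.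
Qed.

Lemma jump_energy_ge0 h x : 0 <= jump_energy h x.
Proof. by apply: sumr_ge0 => y _; rewrite mulr_ge0 ?sqr_ge0. Qed.

Lemma jump_energy_le h x : 0 <= h x -> h x <= next_mean h x ->
  jump_energy h x <= next_mean (fun y => h y ^+ 2) x - h x ^+ 2.
Proof.
move=> h_ge0 h_sub.
have -> : jump_energy h x =
    next_mean (fun y => h y ^+ 2) x - 2 * h x * next_mean h x + h x ^+ 2.
  rewrite -(next_mean_cst (h x ^+ 2) x) /jump_energy /next_mean mulr_sumr.
  rewrite -sumrB -big_split /=.
  by apply: eq_bigr => y _; ring.
nra.
Qed.

Lemma sum_expect_jump_energy x0 h t : (forall x, 0 <= h x) ->
  (forall x, h x <= next_mean h x) ->
  \sum_(0 <= s < t) expect x0 s (jump_energy h) <=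
  expect x0 t (fun y => h y ^+ 2) - h x0 ^+ 2.
Proof.
move=> h_ge0 h_sub; rewrite -(expect0 x0 (fun y => h y ^+ 2)).
rewrite -(telescope_sumr (fun s => expect x0 s (fun y => h y ^+ 2))) //.
apply: ler_sum_nat => s _.
rewrite expectS /expect -sumrB; apply: ler_sum => y _.
by rewrite -mulrBr ler_wpM2l ?chain_dist_ge0 ?jump_energy_le.
Qed.

Lemma chain_dist_cvg0 x0 h y : (forall x, 0 <= h x <= 1) ->
  (forall x, h x <= next_mean h x) -> 0 < jump_energy h y ->
  chain_dist x0 ^~ y @ \oo --> 0.
Proof.
move=> h01 h_sub Ey; apply: cvg_series_cvg_0.
have h_ge0 x : 0 <= h x by case/andP: (h01 x).
apply: nondecreasing_is_cvgn.
  apply/nondecreasing_seqP => t; rewrite /series /= big_nat_recr //=.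
  by rewrite lerDl chain_dist_ge0.
exists (jump_energy h y)^-1 => _ [t _ <-]; rewrite /series /=.
rewrite -[X in _ <= X]mul1r ler_pdivlMr // mulr_suml.
have occupation_le : \sum_(0 <= s < t) chain_dist x0 s y * jump_energy h y <=
    \sum_(0 <= s < t) expect x0 s (jump_energy h).
  apply: ler_sum => s _; rewrite /expect (bigD1 y) //= lerDl.
  by apply: sumr_ge0 => x _; rewrite mulr_ge0 ?chain_dist_ge0 ?jump_energy_ge0.
have := sum_expect_jump_energy x0 t h_ge0 h_sub.
have : expect x0 t (fun x => h x ^+ 2) <= 1.
  rewrite -(expect_cst x0 t 1); apply: expect_le => x.
  by rewrite expr_le1 //; case/andP: (h01 x).
have := sqr_ge0 (h x0); lra.
Qed.

(* [expect x0 t h] increases to a limit, while [chain_dist_cvg0] empties every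
   state of positive jump energy; in the limit all of it sits at [v]. *)
Lemma subharmonic_le_absorption x0 v h :
  (forall x, 0 <= h x <= 1) -> h v = 1 ->
  (forall x, h x <= next_mean h x) ->
  (forall x, x != v -> h x = 0 \/ 0 < jump_energy h x) ->
  h x0 <= limn (chain_dist x0 ^~ v).
Proof.
move=> h01 hv h_sub h_energy.
have h_ge0 x : 0 <= h x by case/andP: (h01 x).
pose e t := expect x0 t h.
have e_nd : {homo e : s t / (s <= t)%N >-> s <= t}.
  exact: expect_subharmonic_nondecreasing.
have e_cvg : cvgn e.
  apply: nondecreasing_is_cvgn => //; exists 1 => _ [t _ <-].
  rewrite /e -(expect_cst x0 t 1); apply: expect_le => x.
  by case/andP: (h01 x).
pose z t := \sum_(x | x != v) chain_dist x0 t x * h x.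
have z_cvg : z @ \oo --> 0.
  have -> : 0 = \sum_(x | x != v) (0 : R) by rewrite big1.
  apply: cvg_big => //; first exact: add_continuous.
  move=> x xv; have [->|Ex] := h_energy x xv.
    by under eq_fun do rewrite mulr0; apply: cvg_cst.
  rewrite -(mul0r (h x)); apply: cvgM; last exact: cvg_cst.
  exact: chain_dist_cvg0.
have -> : chain_dist x0 ^~ v = e \- z.
  apply: funext => t /=; rewrite /e /z /expect (bigD1 v) //= hv mulr1.
  by rewrite addrK.
rewrite (cvg_lim _ (cvgB e_cvg z_cvg)) // subr0 -(expect0 x0 h).
exact: nondecreasing_cvgn_le.
Qed.

End FiniteMarkovChain.

Section MoranChain.
Variables (R : realType) (n : nat) (wR wM : weights R n) (r : R).
Local Notation P := (moran_trans wR wM r).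
Local Notation F := (@total_fitness R n r).

Lemma moran_distE S0 t : moran_dist wR wM r S0 t =1 chain_dist P S0 t.
Proof. by elim: t => [|t IH] T //=; apply: eq_bigr => U _; rewrite IH. Qed.

Lemma next_mean_moran (phi : {set 'I_n} -> R) S :
  next_mean P phi S =
  \sum_i \sum_j (if i \in S then r / F S * wM i j * phi (j |: S)
                 else 1 / F S * wR i j * phi (S :\ j)).
Proof.
rewrite /next_mean /moran_trans.
under eq_bigr => T _ do rewrite mulr_suml.
rewrite exchange_big; apply: eq_bigr => i _.
under eq_bigr => T _ do rewrite mulr_suml.
rewrite exchange_big; apply: eq_bigr => j _.
case: (i \in S); [rewrite (bigD1 (j |: S)) | rewrite (bigD1 (S :\ j))] => //=;
  by rewrite eqxx mulr1 big1 ?addr0 // => T /negbTE ->; rewrite mulr0 mul0r.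
Qed.

Hypothesis wR_ge0 : forall i j, 0 <= wR i j.
Hypothesis wM_ge0 : forall i j, 0 <= wM i j.
Hypothesis wR_sum1 : forall i, \sum_j wR i j = 1.
Hypothesis wM_sum1 : forall i, \sum_j wM i j = 1.
Hypothesis r_gt0 : 0 < r.
Hypothesis n_gt0 : (0 < n)%N.

Lemma total_fitness_gt0 S : 0 < F S.
Proof.
rewrite /total_fitness; have [->|S_gt0] := posnP #|S|.
  by rewrite mulr0 add0r subn0 ltr0n.
by rewrite ltr_pwDl ?ler0n ?mulr_gt0 ?ltr0n.
Qed.

Lemma moran_trans_ge0 S T : 0 <= P S T.
Proof.
have F_gt0 := total_fitness_gt0 S.
have rF_ge0 : 0 <= r / F S by rewrite divr_ge0 ?ltW.
have F1_ge0 : 0 <= 1 / F S by rewrite divr_ge0 ?ler01 ?ltW.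
apply: sumr_ge0 => i _; apply: sumr_ge0 => j _.
by case: (i \in S); rewrite mulr_ge0 ?ler0n // mulr_ge0.
Qed.

Lemma moran_trans_sum1 S : \sum_T P S T = 1.
Proof.
have F_neq0 : F S != 0 by rewrite gt_eqF ?total_fitness_gt0.
have -> : \sum_T P S T = next_mean P (fun=> 1) S.
  by apply: eq_bigr => T _; rewrite mulr1.
rewrite next_mean_moran.
have row_sum i :
    \sum_j (if i \in S then r / F S * wM i j * 1 else 1 / F S * wR i j * 1) =
    (if i \in S then r else 1) / F S.
  case: (i \in S); under eq_bigr do rewrite mulr1.
    by rewrite -mulr_sumr wM_sum1 mulr1.
  by rewrite -mulr_sumr wR_sum1 mulr1 mul1r.
under eq_bigr do rewrite row_sum.
rewrite -mulr_suml.
suff -> : \sum_i (if i \in S then r else 1) = F S by rewrite divff.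
rewrite /total_fitness (bigID (mem S)) /=.
under eq_bigr => i iS do rewrite iS.
under [X in _ + X]eq_bigr => i iS do rewrite (negbTE iS).
rewrite !sumr_const mulr_natr.
have -> : #|[pred i | i \in S]| = #|S| by apply: eq_card.
suff -> : #|[pred i | i \notin S]| = (n - #|S|)%N by [].
transitivity #|~: S|; first by apply: eq_card => i; rewrite !inE.
by rewrite cardsCs finset.setCK card_ord.
Qed.

End MoranChain.

(* [x] is log-convex from [a] on: first nonincreasing, then nondecreasing. *)
Lemma valley_le_max (R : realDomainType) (x u : nat -> R) a b i :
  (forall k, x k.+1 = x k * u k) -> (forall k, 0 <= x k) ->
  (forall k, (a <= k)%N -> u k <= u k.+1) ->
  (a <= i <= b)%N -> x i <= Num.max (x a) (x b).
Proof.
move=> xS x_ge0 u_nd /andP[ai ib].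
have u_mono : {in [pred k | a <= k]%N &, {homo u : k l / (k <= l)%N >-> k <= l}}.
  apply: homo_leq_in => //; first exact: le_trans.
    move=> k l; rewrite !inE => ak _ m /andP[km _].
    by rewrite inE (leq_trans ak) // ltnW.
  by move=> k; rewrite inE => ak _; apply: u_nd.
have [u_ge1|u_lt1] := leP 1 (u i).
  have x_nd : {in [pred k | i <= k]%N &, {homo x : k l / (k <= l)%N >-> k <= l}}.
    apply: homo_leq_in => //; first exact: le_trans.
      move=> k l; rewrite !inE => ik _ m /andP[km _].
      by rewrite inE (leq_trans ik) // ltnW.
    move=> k; rewrite inE => ik _; rewrite xS ler_peMr // (le_trans u_ge1) //.
    by rewrite u_mono ?inE // (leq_trans ai).
  by rewrite le_max (x_nd i b) ?inE ?orbT.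
have x_ni : {in [pred k | a <= k <= i]%N &, {homo x : k l / (k <= l)%N >-> l <= k}}.
  apply: homo_leq_in => //; first by move=> y z w zy yw; apply: le_trans yw zy.
    move=> k l; rewrite !inE => /andP[ak _] /andP[_ li] m /andP[km ml].
    by rewrite inE; lia.
  move=> k; rewrite !inE => /andP[ak _] /andP[_ ki]; rewrite xS ler_piMr //.
  by rewrite ltW // (le_lt_trans _ u_lt1) // u_mono ?inE // ltnW.
by rewrite le_max (x_ni a i) ?inE ?leqnn ?ai.
Qed.

Lemma ler_double_sum (R : numDomainType) (I J : finType) (f : I -> J -> R) a b :
  (forall i j, 0 <= f i j) -> f a b <= \sum_i \sum_j f i j.
Proof.
move=> f_ge0; rewrite (bigD1 a) //= (bigD1 b) //= -addrA lerDl.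
by rewrite addr_ge0 ?sumr_ge0 // => i _; rewrite sumr_ge0.
Qed.

Lemma setD1_notin (T : finType) (A : {set T}) x : x \notin A -> A :\ x = A.
Proof. by move=> xA; apply/finset.setDidPl; rewrite disjoint_sym disjoints1. Qed.

Section StarResidentsCliqueMutants.
Variables (R : realType) (n : nat) (r : R).
Hypothesis n_ge4 : (4 <= n)%N.
Hypothesis r_gt0 : 0 < r.

Local Notation wR := (star_weights R n).
Local Notation wM := (clique_weights R n).
Local Notation P := (moran_trans wR wM r).
Local Notation F := (@total_fitness R n r).
Local Notation w := ((n.-1)%:R^-1 : R).
Implicit Types (S : {set 'I_n}) (i j : 'I_n).

Let n_gt0 : (0 < n)%N. Proof. exact: leq_trans n_ge4. Qed.

Definition centre : 'I_n := Ordinal n_gt0.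

Lemma eq_centre (j : 'I_n) : (j == centre) = (val j == 0%N).
Proof. by rewrite -val_eqE. Qed.

Lemma w_gt0 : 0 < w.
Proof. by rewrite invr_gt0 ltr0n; lia. Qed.

Lemma sum_off_diag (i : 'I_n) (c : R) :
  \sum_j (if i == j then 0 else c) = c *+ n.-1.
Proof.
rewrite (bigD1 i) //= eqxx add0r.
under eq_bigr => j ji do rewrite eq_sym (negbTE ji).
by rewrite sumr_const cardC1 card_ord.
Qed.

Lemma sum_off_diag_w (i : 'I_n) : \sum_j (if i == j then 0 else w) = 1.
Proof. by rewrite sum_off_diag -[_ *+ _]mulr_natr mulVf // pnatr_eq0; lia. Qed.

Lemma clique_offdiag i j : i != j -> wM i j = w.
Proof. by rewrite /clique_weights => /negbTE ->. Qed.

Lemma star_centre j : centre != j -> wR centre j = w.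
Proof. by rewrite /star_weights => /negbTE ->. Qed.

Lemma star_leaf i j : i != centre -> wR i j = (j == centre)%:R.
Proof.
move=> ic; rewrite /star_weights -!eq_centre (negbTE ic).
by have [<-|_] := eqVneq i j; rewrite ?(negbTE ic) //; case: (j == centre).
Qed.

Lemma clique_ge0 i j : 0 <= wM i j.
Proof. by rewrite /clique_weights; case: eqP => // _; rewrite ltW ?w_gt0. Qed.

Lemma star_ge0 i j : 0 <= wR i j.
Proof.
have [<-|ci] := eqVneq centre i; last by rewrite star_leaf 1?eq_sym ?ler0n.
by rewrite /star_weights; case: eqP => // _; rewrite eqxx ltW ?w_gt0.
Qed.

Lemma clique_sum1 i : \sum_j wM i j = 1.
Proof. exact: sum_off_diag_w. Qed.

Lemma star_sum1 i : \sum_j wR i j = 1.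
Proof.
have [<-|ci] := eqVneq centre i; first exact: sum_off_diag_w.
have ic : i != centre by rewrite eq_sym.
rewrite (bigD1 centre) //= star_leaf // eqxx big1 ?addr0 // => j jc.
by rewrite star_leaf // (negbTE jc).
Qed.

(* The weights [pi] make [potential] harmonic at the states with a resident
   centre and k >= 1 mutant leaves: the mutants invade the n-1-k resident leaves
   at total rate r k (n-1-k) w / F, raising the potential by [pi k / pi_total],
   while the centre replaces one of the k mutants at total rate k w / F, lowering
   it by [pi (k-1) / pi_total].  The value [rho (n-1) = r] plays the same role
   for the last step, in which the mutants take over the centre. *)
Definition rho (i : nat) : R :=
  r * (if (i < n.-1)%N then (n.-1 - i)%:R else 1).

Fixpoint pi (k : nat) : R := if k is k'.+1 then pi k' / rho k else 1.

Definition pi_total : R := \sum_(0 <= j < n) pi j.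

Definition pi_cdf (k : nat) : R := (\sum_(0 <= j < k) pi j) / pi_total.

Definition leaves (S : {set 'I_n}) : nat := #|S :\ centre|.

Definition potential (S : {set 'I_n}) : R :=
  if S == [set: 'I_n] then 1 else pi_cdf (leaves S).

Lemma rho_gt0 k : 0 < rho k.
Proof. by rewrite /rho mulr_gt0 //; case: ifP => // lt; rewrite ltr0n subn_gt0. Qed.

Lemma pi_gt0 k : 0 < pi k.
Proof. by elim: k => [|k IH] /=; rewrite ?ltr01 ?divr_gt0 ?rho_gt0. Qed.

Lemma piSE k : pi k.+1 = pi k / rho k.+1.
Proof. by []. Qed.

Lemma piS k : pi k.+1 * rho k.+1 = pi k.
Proof. by rewrite /= mulfVK // gt_eqF ?rho_gt0. Qed.

Lemma pi_total_gt0 : 0 < pi_total.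
Proof.
rewrite /pi_total big_ltn // ltr_pwDl ?pi_gt0 //.
by rewrite sumr_ge0 // => j _; rewrite ltW ?pi_gt0.
Qed.

Lemma pi_cdf0 : pi_cdf 0 = 0.
Proof. by rewrite /pi_cdf big_geq // mul0r. Qed.

Lemma pi_cdfn : pi_cdf n = 1.
Proof. by rewrite /pi_cdf -/pi_total divff // gt_eqF ?pi_total_gt0. Qed.

Lemma pi_cdfS k : pi_cdf k.+1 = pi_cdf k + pi k / pi_total.
Proof. by rewrite /pi_cdf big_nat_recr //= mulrDl. Qed.

Lemma pi_cdf_lt k l : (k < l)%N -> pi_cdf k < pi_cdf l.
Proof.
have step m : pi_cdf m < pi_cdf m.+1.
  by rewrite pi_cdfS ltrDl divr_gt0 ?pi_gt0 ?pi_total_gt0.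
elim: l => // l IH; rewrite ltnS leq_eqVlt => /predU1P[-> //|kl].
exact: lt_trans (IH kl) (step l).
Qed.

Lemma pi_cdf_le k l : (k <= l)%N -> pi_cdf k <= pi_cdf l.
Proof. by rewrite leq_eqVlt => /predU1P[-> //|/pi_cdf_lt/ltW]. Qed.

Lemma leaves_lt S : (leaves S < n)%N.
Proof.
rewrite /leaves -[X in (_ < X)%N](card_ord n) -(cardsT 'I_n).
apply/proper_card/properP; split; first exact: finset.subsetT.
by exists centre; rewrite ?inE ?eqxx.
Qed.

Lemma pi_cdf_leaves_lt1 S : pi_cdf (leaves S) < 1.
Proof. by rewrite -pi_cdfn pi_cdf_lt ?leaves_lt. Qed.

Lemma potential01 S : 0 <= potential S <= 1.
Proof.
rewrite /potential; case: ifP => _; first by rewrite ler01 lexx.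
by rewrite -pi_cdf0 pi_cdf_le // ltW ?pi_cdf_leaves_lt1.
Qed.

Lemma potentialT : potential [set: 'I_n] = 1.
Proof. by rewrite /potential eqxx. Qed.

Lemma potentialE S : S != [set: 'I_n] -> potential S = pi_cdf (leaves S).
Proof. by rewrite /potential => /negbTE ->. Qed.

Lemma notin_neqT S j : j \notin S -> S != [set: 'I_n].
Proof. by apply: contraNneq => ->; rewrite inE. Qed.

Lemma potential0 : potential finset.set0 = 0.
Proof.
rewrite potentialE; last by apply: (@notin_neqT _ centre); rewrite inE.
by rewrite /leaves finset.set0D cards0 pi_cdf0.
Qed.

Lemma leaves_setU1 S j : j \notin S -> j != centre ->
  leaves (j |: S) = (leaves S).+1.
Proof.
move=> jS jc; rewrite /leaves.
have -> : (j |: S) :\ centre = j |: (S :\ centre).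
  by apply/setP => x; rewrite !inE; case: (eqVneq x j) => [->|]; rewrite ?jc.
by rewrite cardsU1 !inE (negbTE jS) andbF.
Qed.

Lemma leaves_setU1_le S j : (leaves S <= leaves (j |: S))%N.
Proof. by rewrite subset_leq_card // finset.setSD // finset.subsetUr. Qed.

Lemma leaves_setD1_centre S : leaves (S :\ centre) = leaves S.
Proof. by rewrite /leaves setD1_notin // setD11. Qed.

Lemma leaves_notin_centre S : centre \notin S -> leaves S = #|S|.
Proof. by move=> cS; rewrite /leaves setD1_notin. Qed.

Lemma potential_setU1_le S j : potential S <= potential (j |: S).
Proof.
have [->|ST] := eqVneq S [set: 'I_n]; first by rewrite finset.setUT.
rewrite (potentialE ST) /potential; case: ifP => _.
  exact/ltW/pi_cdf_leaves_lt1.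
exact/pi_cdf_le/leaves_setU1_le.
Qed.

Lemma potential_setU1_lt S j : j \notin S -> j != centre ->
  potential S < potential (j |: S).
Proof.
move=> jS jc; rewrite (potentialE (notin_neqT jS)) /potential; case: ifP => _.
  exact: pi_cdf_leaves_lt1.
by rewrite leaves_setU1 // pi_cdf_lt.
Qed.

Lemma potential_add_leaf S j : centre \notin S -> j \notin S -> j != centre ->
  potential (j |: S) - potential S = pi (leaves S) / pi_total.
Proof.
move=> cS jS jc; have jST : j |: S != [set: 'I_n].
  by apply: (@notin_neqT _ centre); rewrite !inE negb_or eq_sym jc.
rewrite (potentialE jST) (potentialE (notin_neqT jS)) leaves_setU1 //.
by rewrite pi_cdfS addrAC subrr add0r.
Qed.

Lemma potential_del_leaf S j : centre \notin S -> j \in S ->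
  potential (S :\ j) - potential S = - (pi (leaves S).-1 / pi_total).
Proof.
move=> cS jS; have jc : j != centre by apply: contraNneq cS => <-.
have cSj : centre \notin S :\ j by rewrite !inE negb_and cS orbT.
have jSj : j \notin S :\ j by rewrite !inE eqxx.
have -> : leaves S = (leaves (S :\ j)).+1.
  by rewrite -{1}(finset.setD1K jS) leaves_setU1.
by rewrite -(potential_add_leaf cSj jSj jc) finset.setD1K // opprB.
Qed.

Lemma potential_add_centre S : centre \notin S -> leaves S = n.-1 ->
  potential (centre |: S) - potential S = pi n.-1 / pi_total.
Proof.
move=> cS Sfull; have -> : centre |: S = [set: 'I_n].
  apply/eqP; rewrite eqEcard finset.subsetT cardsT card_ord cardsU1 (negbTE cS).
  by rewrite /= -leaves_notin_centre // Sfull add1n prednK.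
rewrite potentialT (potentialE (notin_neqT cS)) Sfull -pi_cdfn.
by rewrite -{1}(prednK n_gt0) pi_cdfS addrAC subrr add0r.
Qed.

Lemma potential_del_centre S : S != [set: 'I_n] ->
  potential (S :\ centre) = potential S.
Proof.
move=> ST; have ScT : S :\ centre != [set: 'I_n].
  by apply: (@notin_neqT _ centre); rewrite !inE eqxx.
by rewrite (potentialE ST) (potentialE ScT) leaves_setD1_centre.
Qed.

Let P_ge0 := moran_trans_ge0 star_ge0 clique_ge0 r_gt0 n_gt0.
Let P_sum1 := moran_trans_sum1 star_sum1 clique_sum1 r_gt0 n_gt0.

Lemma potential_drift S :
  next_mean P potential S - potential S =
  \sum_i \sum_j (if i \in S
                 then r / F S * wM i j * (potential (j |: S) - potential S)
                 else 1 / F S * wR i j * (potential (S :\ j) - potential S)).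
Proof. by rewrite -next_mean_subr // next_mean_moran. Qed.

Lemma mutant_move_ge0 S i j :
  0 <= r / F S * wM i j * (potential (j |: S) - potential S).
Proof.
have F_gt0 := total_fitness_gt0 r_gt0 n_gt0 S.
by rewrite !mulr_ge0 ?clique_ge0 ?subr_ge0 ?potential_setU1_le ?invr_ge0 ?ltW.
Qed.

Lemma leaves_le S : (leaves S <= n.-1)%N.
Proof. by rewrite -ltnS prednK ?leaves_lt. Qed.

Lemma card_resident_leaves S : centre \notin S ->
  #|~: (centre |: S)| = (n.-1 - leaves S)%N.
Proof.
move=> cS; have := cardsC (centre |: S).
rewrite cardsU1 (negbTE cS) card_ord leaves_notin_centre //= add1n.
by move/(congr1 (fun m => (m.-1 - #|S|)%N)); rewrite /= addKn.
Qed.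

Lemma mutant_gain S i : centre \notin S -> i \in S ->
  w / F S * (rho (leaves S) * pi (leaves S) / pi_total) <=
  \sum_j r / F S * wM i j * (potential (j |: S) - potential S).
Proof.
move=> cS iS; have ic : i != centre by apply: contraNneq cS => <-.
move: (leaves_le S); rewrite leq_eqVlt => /predU1P[Sfull|lt_full].
  rewrite (bigD1 centre) //=; apply: ler_wpDr.
    by apply: sumr_ge0 => j _; exact: mutant_move_ge0.
  rewrite clique_offdiag // potential_add_centre // /rho Sfull ltnn mulr1; lra.
rewrite (bigID (mem (~: (centre |: S)))) /=; apply: ler_wpDr.
  by apply: sumr_ge0 => j _; exact: mutant_move_ge0.
rewrite (eq_bigr (fun=> r / F S * w * (pi (leaves S) / pi_total))); last first.
  move=> j; rewrite !inE negb_or => /andP[cj jS].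
  have ij : i != j by apply: contraNneq jS => <-.
  by rewrite clique_offdiag // potential_add_leaf // eq_sym.
rewrite sumr_const card_resident_leaves // /rho lt_full -mulr_natr; lra.
Qed.

Lemma centre_loss S : centre \notin S ->
  \sum_j 1 / F S * wR centre j * (potential (S :\ j) - potential S) =
  - (w / F S * (pi (leaves S).-1 / pi_total)) *+ #|S|.
Proof.
move=> cS; rewrite -sumr_const [RHS]big_mkcond /=; apply: eq_bigr => j _.
case: ifPn => jS; last by rewrite setD1_notin // subrr mulr0.
have cj : centre != j by apply: contraNneq cS => ->.
by rewrite star_centre // potential_del_leaf //; lra.
Qed.

Lemma leaf_resident_null S i : centre \notin S -> i != centre ->
  \sum_j 1 / F S * wR i j * (potential (S :\ j) - potential S) = 0.
Proof.
move=> cS ic; apply: big1 => j _; rewrite star_leaf //.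
have [->|_] := eqVneq j centre; last by rewrite mulr0 mul0r.
by rewrite setD1_notin // subrr mulr0.
Qed.

Lemma potential_subharmonic S : potential S <= next_mean P potential S.
Proof.
rewrite -subr_ge0 potential_drift.
have [cS|cS] := boolP (centre \in S).
  apply: sumr_ge0 => i _; apply: sumr_ge0 => j _.
  case: ifPn => iS; first exact: mutant_move_ge0.
  have ic : i != centre by apply: contraNneq iS => ->.
  rewrite star_leaf //; have [->|_] := eqVneq j centre; last by rewrite mulr0 mul0r.
  by rewrite potential_del_centre ?subrr ?mulr0 // (notin_neqT iS).
rewrite (bigID (mem S)) /=.
under eq_bigr => i iS do rewrite iS.
under [X in 0 <= _ + X]eq_bigr => i iS do rewrite (negbTE iS).
rewrite [X in _ + X](bigD1 centre) //= [X in _ + (_ + X)]big1 ?addr0; last first.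
  by move=> i /andP[iS ic]; apply: leaf_resident_null.
rewrite centre_loss // mulNrn subr_ge0.
have [S0|S_gt0] := posnP #|S|.
  rewrite S0 mulr0n sumr_ge0 // => i _.
  by apply: sumr_ge0 => j _; apply: mutant_move_ge0.
have leavesS : leaves S = (leaves S).-1.+1 by rewrite prednK // leaves_notin_centre.
rewrite -piS -leavesS [pi _ * _]mulrC -sumr_const; apply: ler_sum => i iS.
exact: mutant_gain.
Qed.

Lemma potential_jump_energy S : S != [set: 'I_n] ->
  potential S = 0 \/ 0 < jump_energy P potential S.
Proof.
move=> ST; have [->|S0] := eqVneq S finset.set0; first by left; exact: potential0.
right; have F_gt0 := total_fitness_gt0 r_gt0 n_gt0 S.
have -> : jump_energy P potential S =
    next_mean P (fun T => (potential T - potential S) ^+ 2) S by [].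
pose f i j := if i \in S
  then r / F S * wM i j * (potential (j |: S) - potential S) ^+ 2
  else 1 / F S * wR i j * (potential (S :\ j) - potential S) ^+ 2.
rewrite next_mean_moran -/(\sum_i \sum_j f i j).
have f_ge0 i j : 0 <= f i j.
  rewrite /f; case: ifP => _; rewrite mulr_ge0 ?sqr_ge0 //.
    by rewrite mulr_ge0 ?clique_ge0 ?divr_ge0 ?ltW.
  by rewrite mulr_ge0 ?star_ge0 ?divr_ge0 ?ler01 ?ltW.
have [cS|cS] := boolP (centre \in S).
  have [j _ jS] : exists2 j, j \in [set: 'I_n] & j \notin S.
    by apply/subsetPn; rewrite finset.subTset.
  have cj : centre != j by apply: contraNneq jS => <-.
  apply: lt_le_trans (ler_double_sum centre j f_ge0).
  rewrite /f cS clique_offdiag //; apply: mulr_gt0.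
    by rewrite mulr_gt0 ?divr_gt0 ?w_gt0.
  by rewrite exprn_gt0 // subr_gt0 potential_setU1_lt // eq_sym.
have /finset.set0Pn[i iS] := S0.
have ci : centre != i by apply: contraNneq cS => ->.
apply: lt_le_trans (ler_double_sum centre i f_ge0).
rewrite /f (negbTE cS) star_centre // potential_del_leaf // sqrrN.
apply: mulr_gt0; first by rewrite mulr_gt0 ?divr_gt0 ?ltr01 ?w_gt0.
by rewrite exprn_gt0 // divr_gt0 ?pi_gt0 ?pi_total_gt0.
Qed.

Lemma potential_le_fixation_from S0 : potential S0 <= fixation_from wR wM r S0.
Proof.
rewrite /fixation_from (_ : (fun t => _) = chain_dist P S0 ^~ [set: 'I_n]).
  apply: subharmonic_le_absorption => //.
  - exact: potential01.
  - exact: potentialT.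
  - exact: potential_subharmonic.
  - exact: potential_jump_energy.
by apply: funext => t; apply: moran_distE.
Qed.

Lemma potential_set1 i :
  potential [set i] = if i == centre then 0 else pi_total^-1.
Proof.
have [j ji] : exists j, j != i.
  have [->|ic] := eqVneq i centre; last by exists centre; rewrite eq_sym.
  by exists (Ordinal (leq_trans (isT : 1 < 4)%N n_ge4)); rewrite -val_eqE.
rewrite potentialE; last by apply: (@notin_neqT _ j); rewrite inE.
rewrite /leaves; have [->|ic] := eqVneq i centre.
  by rewrite finset.setDv cards0 pi_cdf0.
by rewrite setD1_notin ?inE 1?eq_sym // cards1 /pi_cdf big_nat1 mul1r.
Qed.

Lemma fixation_prob_ge : (1 - n%:R^-1) / pi_total <= fixation_prob wR wM r.
Proof.
rewrite /fixation_prob.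
apply: le_trans (_ : n%:R^-1 * \sum_i potential [set i] <= _); last first.
  rewrite ler_wpM2l ?invr_ge0 ?ler0n // ler_sum // => i _.
  exact: potential_le_fixation_from.
rewrite (bigD1 centre) //= potential_set1 eqxx add0r.
rewrite (eq_bigr (fun=> pi_total^-1)) => [|i ic]; last first.
  by rewrite potential_set1 (negbTE ic).
rewrite sumr_const cardC1 card_ord -[_ *+ n.-1]mulr_natr.
have n_neq0 : (n%:R : R) != 0 by rewrite pnatr_eq0 -lt0n.
have -> : (n.-1)%:R = n%:R - 1 :> R.
  by rewrite -{2}(prednK n_gt0) -addn1 natrD addrK.
rewrite le_eqVlt; apply/orP; left; apply/eqP; field.
by rewrite n_neq0 gt_eqF ?pi_total_gt0.
Qed.

Lemma rho_nonincreasing k : rho k.+1 <= rho k.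
Proof.
rewrite /rho ler_wpM2l ?(ltW r_gt0) //; case: (ltnP k.+1 n.-1) => [lt|ge].
  by rewrite ltnW // ler_nat; lia.
by case: ltnP => // lt; rewrite (_ : (n.-1 - k)%N = 1%N) //; lia.
Qed.

Lemma natr_n2_neq0 : (n - 2)%:R != 0 :> R.
Proof. by rewrite pnatr_eq0; lia. Qed.

Lemma natr_n3_neq0 : (n - 3)%:R != 0 :> R.
Proof. by rewrite pnatr_eq0; lia. Qed.

Lemma pi1 : pi 1 = (r * (n - 2)%:R)^-1.
Proof.
rewrite /= /rho ifT; last by lia.
by rewrite (_ : (n.-1 - 1)%N = (n - 2)%N) ?mul1r //; lia.
Qed.

Lemma pi2 : pi 2 = (r ^+ 2 * (n - 2)%:R * (n - 3)%:R)^-1.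
Proof.
rewrite /= -/(pi 1) pi1 /rho ifT; last by lia.
rewrite (_ : (n.-1 - 2)%N = (n - 3)%N); last by lia.
by field; rewrite natr_n2_neq0 natr_n3_neq0 gt_eqF.
Qed.

Lemma pi_shift k : (k <= n - 4)%N ->
  pi (k + 2) * r ^+ k * ((n - 4)`!)%:R = pi 2 * ((n - 4 - k)`!)%:R.
Proof.
elim: k => [_|k IH le_k]; first by rewrite expr0 mulr1 subn0.
set m := (n - 4 - k.+1)%N.
have := IH (ltnW le_k); rewrite (_ : (n - 4 - k)%N = m.+1); last by lia.
rewrite factS natrM.
have rhoE : rho (k + 2).+1 = r * m.+1%:R.
  rewrite /rho ifT; last by lia.
  by rewrite (_ : (n.-1 - (k + 2).+1)%N = m.+1) //; lia.
move=> IHm; rewrite addSn piSE rhoE exprS.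
transitivity (pi (k + 2) * r ^+ k * ((n - 4)`!)%:R / m.+1%:R).
  by field; rewrite nat1r pnatr_eq0 /= gt_eqF.
by rewrite IHm; field; rewrite nat1r pnatr_eq0.
Qed.

Lemma pi_last : pi n.-1 * (r ^+ (n - 3) * ((n - 4)`!)%:R) = pi 2.
Proof.
have := pi_shift (leqnn (n - 4)); rewrite subnn fact0 mulr1 => <-.
rewrite (_ : n.-1 = (n - 4 + 2).+1); last by lia.
rewrite piSE /rho ifF; last by lia.
rewrite (_ : (n - 3)%N = (n - 4).+1); last by lia.
by rewrite exprS; field; rewrite gt_eqF.
Qed.

Lemma pi_le_pi2 k : 1 <= r ^+ (n - 3) * ((n - 4)`!)%:R ->
  (2 <= k <= n.-1)%N -> pi k <= pi 2.
Proof.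
move=> r_large k_range.
have last_le : pi n.-1 <= pi 2 by rewrite -pi_last ler_peMr // ltW ?pi_gt0.
rewrite -(max_idPl last_le).
apply: (valley_le_max (u := fun l => (rho l.+1)^-1)) => //.
- by move=> l; rewrite ltW ?pi_gt0.
- by move=> l _; rewrite lef_pV2 ?posrE ?rho_gt0 ?rho_nonincreasing.
Qed.

Lemma pi_total_le : 1 <= r ^+ (n - 3) * ((n - 4)`!)%:R ->
  pi_total <= 1 + (r * (n - 2)%:R)^-1 + (r ^+ 2 * (n - 3)%:R)^-1.
Proof.
move=> r_large; rewrite /pi_total big_ltn // big_ltn; last by lia.
rewrite /= -/(pi 1) pi1 addrA lerD2l.
apply: le_trans (_ : \sum_(2 <= k < n) pi 2 <= _).
  by apply: ler_sum_nat => k /andP[k2 kn]; rewrite pi_le_pi2 // k2 -ltnS prednK.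
rewrite sumr_const_nat pi2 le_eqVlt; apply/orP; left; apply/eqP.
by rewrite -[_ *+ _]mulr_natr; field; rewrite natr_n2_neq0 natr_n3_neq0 gt_eqF.
Qed.

End StarResidentsCliqueMutants.

Lemma exprM_gt1_of_powR (R : realType) (y r : R) (m : nat) :
  0 < y -> 0 < r -> (0 < m)%N -> y `^ (- m%:R^-1) < r -> 1 < r ^+ m * y.
Proof.
move=> y_gt0 r_gt0 m_gt0 lt_r.
have m_neq0 : m%:R != 0 :> R by rewrite pnatr_eq0 -lt0n.
have : (y `^ (- m%:R^-1)) `^ m%:R < r `^ m%:R.
  by rewrite gt0_ltr_powR ?ltr0n // nnegrE ?powR_ge0 ?ltW.
rewrite -powRrM mulNr mulVf // powR_inv1 ?ltW // powR_mulrn ?ltW //.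
by move=> lt; rewrite -(mulVf (lt0r_neq0 y_gt0)) ltr_pM2r.
Qed.

Lemma exprM_ge1_pred (R : realDomainType) (y r : R) (m : nat) :
  0 < r -> 1 <= y -> 1 < r ^+ m.+1 * y -> 1 <= r ^+ m * y.
Proof.
move=> r_gt0 y_ge1; have y_ge0 := le_trans ler01 y_ge1.
rewrite exprSr -mulrA [r * _]mulrC mulrA.
have [r_le1|r_gt1] := lerP r 1.
  move=> /ltW /le_trans; apply.
  by rewrite ler_piMr // mulr_ge0 ?exprn_ge0 ?(ltW r_gt0).
by move=> _; rewrite mulr_ege1 // exprn_ege1 // ltW.
Qed.

Theorem theorem3 (R : realType) (n : nat) (r : R) :
  (4 <= n)%N -> 0 < r ->
  ((n - 4)`!)%N%:R `^ (- ((n - 2)%N%:R)^-1) < r ->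
  let f := fixation_prob (star_weights R n) (clique_weights R n) r in
  let B := (1 - n%:R^-1) /
           (1 + (r * (n - 2)%N%:R)^-1 + (r ^+ 2 * (n - 3)%N%:R)^-1) in
  B <= f /\
  1 - n%:R^-1 - (r * (n - 2)%N%:R)^-1 - (r ^+ 2 * (n - 3)%N%:R)^-1 < B.
Proof.
move=> n_ge4 r_gt0 r_large f B.
have fact_ge1 : 1 <= ((n - 4)`!)%:R :> R by rewrite ler1n fact_gt0.
have r_large' : 1 <= r ^+ (n - 3) * ((n - 4)`!)%:R.
  apply: exprM_ge1_pred => //; rewrite (_ : (n - 3).+1 = n - 2)%N; last by lia.
  by apply: exprM_gt1_of_powR; rewrite ?ltr0n ?fact_gt0 //; lia.
have Z_gt0 := pi_total_gt0 n_ge4 r_gt0.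
have Z_le := pi_total_le n_ge4 r_gt0 r_large'.
have f_ge := fixation_prob_ge n_ge4 r_gt0.
rewrite -/f in f_ge.
set a := (r * _)^-1 in Z_le B *; set b := (r ^+ 2 * _)^-1 in Z_le B *.
set c := 1 - n%:R^-1 in f_ge B *.
have a_gt0 : 0 < a by rewrite invr_gt0 mulr_gt0 // ltr0n; lia.
have b_gt0 : 0 < b by rewrite invr_gt0 mulr_gt0 ?exprn_gt0 // ltr0n; lia.
have c_ge0 : 0 <= c by rewrite subr_ge0 invf_le1 ?ler1n ?ltr0n; lia.
have c_lt1 : c < 1 by rewrite ltrBlDr ltrDl invr_gt0 ltr0n; lia.
split; last by rewrite /B ltr_pdivlMr; nra.
apply: le_trans f_ge; rewrite ler_wpM2l // lef_pV2 ?posrE //; lra.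
Qed.
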